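(* Let $S$ be an infinite set and $\mathcal{F}\subseteq 2^S$ countable, nontrivial, and closed under finite unions and finite intersections. Let $(C,\mathbf{A})$ be a conditional classification problem with $C$ and $S\setminus C$ infinite and $\mathbf{A}=(A_1,\dots,A_k)$ such that $A_i\notin\mathit{cclass}_1(C,\mathcal{F})$ for $1\le i\le k$. Then there exists $\mathbf{B}\le\mathbf{A}$ with $|\mathbf{B}|=k$ and $\mathbf{B}\in\mathit{ccore}_k(C,\mathcal{F})$.
   Context: $\mathcal{F}$ is nontrivial if $\emptyset,S\in\mathcal{F}$ and for all $Q\in\mathcal{F}$ and finite $E\subseteq S$ both $Q\cup E\in\mathcal{F}$ and $Q\setminus E\in\mathcal{F}$. A classification problem is a vector $(A_1,\dots,A_k)$, $k\ge1$, of pairwise disjoint infinite subsets of $S$, of length $k$. A conditional classification problem is a pair $(C,\mathbf{A})$ with $C\subseteq S$, $\mathbf{A}$ a classification problem and $C$ disjoint from all components of $\mathbf{A}$. For vectors $\mathbf{B}=(B_1,\dots,B_m)$, $\mathbf{Q}=(Q_1,\dots,Q_k)$, $\mathbf{B}\le\mathbf{Q}$ means $1\le m\le k$ and there is an injective $\sigma:\{1,\dots,m\}\to\{1,\dots,k\}$ with $B_i\subseteq Q_{\sigma(i)}$. An $\mathcal{F}$-partition is a vector of pairwise disjoint members of $\mathcal{F}$ whose union is $S$. $\mathit{cclass}_k(C,\mathcal{F})$ is the set of classification problems $\mathbf{A}$ of length $k$ such that $(C,\mathbf{A})$ is a conditional classification problem and there is an $\mathcal{F}$-partition $(Q_0,Q_1,\dots,Q_k)$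 with $C\subseteq Q_0$ and $\mathbf{A}\le(Q_1,\dots,Q_k)$ (a single set $A$ is identified with $(A)$). $\mathit{ccore}_k(C,\mathcal{F})$ is the set of classification problems $\mathbf{A}$ of length $k$ with $(C,\mathbf{A})$ a conditional classification problem such that every classification problem $\mathbf{A}'\le\mathbf{A}$ (any length $\ge1$) satisfies $\mathbf{A}'\notin\mathit{cclass}_{|\mathbf{A}'|}(C,\mathcal{F})$. *)

From HB Require Import structures.
From mathcomp Require Import all_boot all_order.
From mathcomp Require Import boolp classical_sets functions cardinality.

Unset Printing Implicit Defensive.
Local Open Scope classical_set_scope.

(* The ground set S is the whole type S (setT); subsets are [set S]. *)

Definition nontrivial {S : Type} (F : set (set S)) : Prop :=
  F set0 /\ F setT /\
  (forall Q E : set S, F Q -> finite_set E -> F (Q `|` E) /\ F (Q `\` E)).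

(* closure under (binary, hence all nonempty finite) unions and intersections *)
Definition union_inter_closed {S : Type} (F : set (set S)) : Prop :=
  forall Q1 Q2 : set S, F Q1 -> F Q2 -> F (Q1 `|` Q2) /\ F (Q1 `&` Q2).

Definition pairwise_disj {S : Type} {k : nat} (A : 'I_k -> set S) : Prop :=
  forall i j : 'I_k, i != j -> A i `&` A j = set0.

Definition class_problem {S : Type} {k : nat} (A : 'I_k -> set S) : Prop :=
  (1 <= k)%N /\ pairwise_disj A /\ (forall i, infinite_set (A i)).

Definition cond_class_problem {S : Type} {k : nat} (C : set S)
    (A : 'I_k -> set S) : Prop :=
  class_problem A /\ (forall i, C `&` A i = set0).

Definition vle {S : Type} {m k : nat} (B : 'I_m -> set S) (Q : 'I_k -> set S)
  : Prop :=
  (1 <= m)%N /\ (m <= k)%N /\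
  exists sigma : 'I_m -> 'I_k, injective sigma /\ forall i, B i `<=` Q (sigma i).

Definition F_partition {S : Type} {n : nat} (F : set (set S))
    (Q : 'I_n -> set S) : Prop :=
  pairwise_disj Q /\ (forall i, F (Q i)) /\ \bigcup_(i in [set: 'I_n]) Q i = setT.

Definition cclass {S : Type} (k : nat) (C : set S) (F : set (set S))
    (A : 'I_k -> set S) : Prop :=
  cond_class_problem C A /\
  exists Q : 'I_k.+1 -> set S,
    F_partition F Q /\ C `<=` Q ord0 /\ vle A (fun i : 'I_k => Q (lift ord0 i)).

Definition ccore {S : Type} (k : nat) (C : set S) (F : set (set S))
    (A : 'I_k -> set S) : Prop :=
  cond_class_problem C A /\
  forall (m : nat) (A' : 'I_m -> set S),
    class_problem A' -> vle A' A -> ~ cclass m C F A'.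

From HB Require Import structures.
From mathcomp Require Import all_boot all_order.
From mathcomp Require Import boolp classical_sets functions cardinality.
Local Open Scope classical_set_scope.

(* Call [Q] clopen avoiding [C] when [Q] and [~` Q] lie in [F] and [C] lies in
   [~` Q].  These sets form a countable family closed under unions and containing
   the finite subsets of [~` C], and no [A_i] is contained in one of them, for
   then [(~` Q, Q)] would put [A_i] in [cclass_1].  A diagonal argument over an
   enumeration of the family gives an infinite [B_i] in [A_i] meeting each of
   them in a finite set.  Every block but [Q_0] of an [F]-partition with [C] in
   [Q_0] is clopen avoiding [C], so it contains no infinite subset of any [B_i]:
   [B] is a core. *)

Lemma countable_range {T : Type} {P : set T} :
  countable P -> P !=set0 -> exists e : nat -> T, P = range e.
Proof.
move=> /pfcard_geP[->|/surjfunPex[e ->]]; last by exists e.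
by case.
Qed.

Lemma escaping_seq (T : Type) (A : set T) (e : nat -> set T) :
  (forall n, ~ A `<=` \big[setU/set0]_(j < n.+1) e j) ->
  exists x : nat -> T, (forall n, A (x n)) /\ forall j n, (j <= n)%N -> ~ e j (x n).
Proof.
move=> notA.
have /choice[x Hx] :
    forall n, exists y, A y /\ ~ (\big[setU/set0]_(j < n.+1) e j) y.
  move=> n; apply: contrapT => noy; apply: (notA n) => y Ay.
  by apply: contrapT => nUy; apply: noy; exists y.
exists x; split=> [n|j n jn ejx]; first exact: (Hx n).1.
by apply: (Hx n).2; exact: (@bigsetU_sup _ j n.+1 e jn).
Qed.

(* [B] is the range of a sequence whose [n]-th term avoids the first [n + 1]
   members of an enumeration of [P]; were [B] finite, it would itself be one of
   those members, which it escapes. *)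
Lemma almost_disjoint_infinite_subset (T : Type) (P : set (set T)) (D A : set T) :
  countable P -> (forall Q1 Q2, P Q1 -> P Q2 -> P (Q1 `|` Q2)) ->
  (forall E, finite_set E -> E `<=` D -> P E) ->
  A `<=` D -> (forall Q, P Q -> ~ A `<=` Q) ->
  exists B, [/\ B `<=` A, infinite_set B & forall Q, P Q -> finite_set (B `&` Q)].
Proof.
move=> cP PU Pfin AD notA.
have P0 : P set0 by apply: Pfin.
have [e Pe] := countable_range cP (ex_intro _ _ P0).
have Pe_j j : P (e j) by rewrite Pe.
have [x [Ax xe]] : exists x : nat -> T,
    (forall n, A (x n)) /\ forall j n, (j <= n)%N -> ~ e j (x n).
  apply: escaping_seq => n; apply: notA.
  by apply: (big_ind P) => // j _; apply: Pe_j.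
exists (range x); split=> [_ [n _ <-]|finx|Q]; first exact: Ax; last first.
  rewrite Pe => -[j _ <-]; apply: sub_finite_set (finite_image x (finite_II j)).
  move=> _ [[n _ <-] ejx]; exists n => //=.
  by rewrite ltnNge; apply/negP => /xe; apply.
have [j _ ej] : range e (range x).
  by rewrite -Pe; apply: Pfin => // _ [n _ <-]; apply/AD/Ax.
by apply: (xe j j (leqnn j)); rewrite ej; exists j.
Qed.

Section ClopenAvoiding.
Context {S : Type} (F : set (set S)).
Hypotheses (F_nontriv : nontrivial F) (F_closed : union_inter_closed F).

Definition clopen_avoiding (C Q : set S) : Prop :=
  [/\ F Q, F (~` Q) & C `<=` ~` Q].

Lemma clopen_avoidingU C Q1 Q2 : clopen_avoiding C Q1 -> clopen_avoiding C Q2 ->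
  clopen_avoiding C (Q1 `|` Q2).
Proof.
move=> [FQ1 FQ1c CQ1] [FQ2 FQ2c CQ2]; split; first exact: (F_closed _ _ FQ1 FQ2).1.
  by rewrite setCU; exact: (F_closed _ _ FQ1c FQ2c).2.
by move=> x Cx; rewrite setCU; split; [apply: CQ1 | apply: CQ2].
Qed.

Lemma clopen_avoiding_finite C E : finite_set E -> E `<=` ~` C ->
  clopen_avoiding C E.
Proof.
have [F0 [FT FE]] := F_nontriv; move=> finE EC; split.
- by rewrite -(set0U E); exact: (FE _ _ F0 finE).1.
- by rewrite -setTD; exact: (FE _ _ FT finE).2.
- by move=> x Cx Ex; exact: EC Ex Cx.
Qed.

Lemma countable_clopen_avoiding C : countable F ->
  countable [set Q | clopen_avoiding C Q].
Proof. by apply: sub_countable; apply: subset_card_le => Q []. Qed.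

Lemma F_bigsetU (I : finType) (P : {pred I}) (f : I -> set S) :
  (forall i, P i -> F (f i)) -> F (\big[setU/set0]_(i in P) f i).
Proof.
move=> Ff; apply: big_ind => [|Q1 Q2 FQ1 FQ2|//]; first by case: F_nontriv.
exact: (F_closed _ _ FQ1 FQ2).1.
Qed.

Lemma F_partition_setC n (Q : 'I_n -> set S) j :
  F_partition F Q -> F (~` Q j).
Proof.
move=> [disjQ [FQ covQ]].
suff -> : ~` Q j = \big[setU/set0]_(l in [pred l | l != j]) Q l by apply: F_bigsetU.
rewrite -bigcup_pred; apply/seteqP; split=> x.
  move=> Qjx; have [l _ Qlx] : (\bigcup_(i in [set: 'I_n]) Q i) x by rewrite covQ.
  by exists l => //=; apply: contraPneq Qjx => <-.
move=> [l /= lj Qlx] Qjx.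
by have : (Q l `&` Q j) x by []; rewrite disjQ.
Qed.

Lemma F_partition_block_clopen_avoiding C n (Q : 'I_n.+1 -> set S) j :
  F_partition F Q -> C `<=` Q ord0 -> clopen_avoiding C (Q (lift ord0 j)).
Proof.
move=> partQ CQ0; have [disjQ [FQ _]] := partQ.
split => //; first exact: F_partition_setC.
move=> x Cx Qjx; have : (Q ord0 `&` Q (lift ord0 j)) x by split => //; apply: CQ0.
by rewrite disjQ // neq_lift.
Qed.

Lemma cclass1_clopen_avoiding C (A Q : set S) :
  cond_class_problem C (fun _ : 'I_1 => A) -> clopen_avoiding C Q -> A `<=` Q ->
  cclass 1 C F (fun _ : 'I_1 => A).
Proof.
move=> probA [FQ FQc CQ] AQ; split => //.
exists (fun l : 'I_2 => if l == ord0 then ~` Q else Q); split; last first.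
  split; first exact: CQ.
  by do 2!split => //; exists id; split => // i; rewrite (negPf (neq_lift _ _)).
split; last first.
  split; first by move=> l; case: ifP.
  apply/seteqP; split => // x _.
  by have [Qx|nQx] := pselect (Q x); [exists (lift ord0 ord0) | exists ord0].
move=> [[|[|l1]] ?] [[|[|l2]] ?] //= _; by [rewrite setICl | rewrite setICr].
Qed.

End ClopenAvoiding.

Lemma cond_class_problem_sub (S : Type) k (C : set S) (A B : 'I_k -> set S) :
  cond_class_problem C A -> (forall i, B i `<=` A i) ->
  (forall i, infinite_set (B i)) -> cond_class_problem C B.
Proof.
move=> [[k1 [disjA _]] CA] BA infB; split; first (split => //; split => //).
- move=> i j ij; apply/seteqP; split => // x [Bix Bjx].
  have : (A i `&` A j) x by split; apply: BA.
  by rewrite disjA.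
- move=> i; apply/seteqP; split => // x [Cx Bix].
  have : (C `&` A i) x by split => //; apply: BA.
  by rewrite CA.
Qed.

Lemma ccore_almost_disjoint (S : Type) (F : set (set S)) k (C : set S)
    (B : 'I_k -> set S) :
  nontrivial F -> union_inter_closed F -> cond_class_problem C B ->
  (forall i Q, clopen_avoiding F C Q -> finite_set (B i `&` Q)) ->
  ccore k C F B.
Proof.
move=> F_nontriv F_closed probB finBQ; split => // m A' [m1 [_ infA']]
  [_ [_ [tau [_ A'B]]]] [_ [Q [partQ [CQ0 [_ [_ [sigma [_ A'Q]]]]]]]].
pose i0 : 'I_m := Ordinal m1.
have QC : clopen_avoiding F C (Q (lift ord0 (sigma i0))).
  exact: F_partition_block_clopen_avoiding.
apply: (infA' i0); apply: sub_finite_set (finBQ (tau i0) _ QC).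
by move=> x A'x; split; [apply: A'B | apply: A'Q].
Qed.

Theorem lemma4p6 (S : Type) (F : set (set S)) :
  infinite_set [set: S] ->
  countable F -> nontrivial F -> union_inter_closed F ->
  forall (k : nat) (C : set S) (A : 'I_k -> set S),
    cond_class_problem C A ->
    infinite_set C -> infinite_set (~` C) ->
    (forall i : 'I_k, ~ cclass 1 C F (fun _ : 'I_1 => A i)) ->
    exists B : 'I_k -> set S, vle B A /\ ccore k C F B.
Proof.
move=> _ cF F_nontriv F_closed k C A probA _ _ notA1.
have [[k1 [_ infA]] CA] := probA.
have notA_sub i Q : clopen_avoiding F C Q -> ~ A i `<=` Q.
  move=> QC AQ; apply: (notA1 i); apply: (@cclass1_clopen_avoiding _ F C (A i) Q) => //.
  split; last by move=> _; apply: CA.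
  by do 2!split => //; move=> a b; rewrite (ord1 a) (ord1 b) eqxx.
have /choice[B HB] i : exists b, [/\ b `<=` A i, infinite_set b &
    forall Q, clopen_avoiding F C Q -> finite_set (b `&` Q)].
  apply: (@almost_disjoint_infinite_subset _ _ (~` C)) (notA_sub i).
  - exact: countable_clopen_avoiding.
  - exact: clopen_avoidingU.
  - exact: clopen_avoiding_finite.
  - by move=> x Aix Cx; have : (C `&` A i) x by []; rewrite CA.
exists B; split; first by do 2!split => //; exists id; split => // i; case: (HB i).
apply: ccore_almost_disjoint => // [|i]; last by case: (HB i).
by apply: cond_class_problem_sub probA _ _ => i; case: (HB i).
Qed.
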